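(* Let $V$ be a complex vector space of finite dimension $N$, let $(R,F)$ be a couple of compatible braidings on $V\otimes V$ with $F$ an involutive symmetry. Let $r(u,v)$ be either the braided rational $r$-matrix $r(u,v)=\frac{F}{u-v}$, or the braided trigonometric $r$-matrix $r(u,v)=\frac{F\,u}{u-v}-\frac{r}{2}$, where in the latter case $R=R(q)$ is a family of Hecke symmetries analytic in $q$ near $1$, compatible with $F$ for each $q$, with $R(1)=F$, and $r$ is defined by $R(q)F=I+h\,r+O(h^2)$, $q=e^h$. Then for any $N\times N$ matrix $A$ and any pairwise distinct positive integers $i,j,k$, $$ r_{\overline{ij}}(u,v)\,A_{\overline k}=A_{\overline k}\,r_{\overline{ij}}(u,v).$$
   Context: A braiding is an invertible $R\in\mathrm{End}(V\otimes V)$ with $(R\otimes I)(I\otimes R)(R\otimes I)=(I\otimes R)(R\otimes I)(I\otimes R)$; involutive symmetry: $R^2=I$; Hecke symmetry: $(R-qI)(R+q^{-1}I)=0$, $q\ne\pm1$. $X_{k,k+1}$ is $X$ acting on factors $k,k+1$ of $V^{\otimes n}$; $A_1=A\otimes I\otimes\cdots\otimes I$. Compatibility: $R_{12}F_{23}F_{12}=F_{23}F_{12}R_{23}$, $R_{23}F_{12}F_{23}=F_{12}F_{23}R_{12}$. Overlined indices: $A_{\overline 1}=A_1$, $A_{\overline{k+1}}=F_{k,k+1}A_{\overline k}F_{k,k+1}^{-1}$; for $X\in\mathrm{End}(V\otimes V)$ and $k<l$, $X_{\overline{kl}}=(F_{k-1,k}\cdots F_{12})(F_{l-1,l}\cdots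 F_{23})X_{12}(F_{23}^{-1}\cdots F_{l-1,l}^{-1})(F_{12}^{-1}\cdots F_{k-1,k}^{-1})$ and $X_{\overline{lk}}:=(FXF)_{\overline{kl}}$; for parameter-dependent $X(u,v)$ this is applied for fixed $(u,v)$. *)

(* V = C^N with C = R[i] the complex numbers over a
   real-closed complete archimedean field R : realType (i.e. R = the reals). *)
From HB Require Import structures.
From mathcomp Require Import all_boot all_order all_algebra.
From mathcomp Require Import complex mxtens.
From mathcomp Require Import reals sequences exp trigo.
Set Implicit Arguments. Unset Strict Implicit. Unset Printing Implicit Defensive.
Import Order.TTheory GRing.Theory Num.Theory.
Local Open Scope ring_scope.
Local Open Scope complex_scope.

Section Braided.
Variable R : realType.
Local Notation C := R[i].
Variable N : nat.
(* End(V) = 'M[C]_N, End(V (x) V) = 'M[C]_(N*N), End(V^{(x) n}) = 'M[C]_(N^n);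
   tensor products of operators are Kronecker products (mxtens.tensmx, A *t B). *)

(* X_{k,k+1}: X acting on factors k,k+1 (1-based) of V^{(x) n}
   = I_{N^(k-1)} (x) X (x) I_{N^(n-k-1)}  (for 1 <= k < n; the dimensions
   then agree exactly, so conform_mx is the identity cast). *)
Definition op2 (n k : nat) (X : 'M[C]_(N * N)) : 'M[C]_(N ^ n) :=
  conform_mx 1%:M
    ((1%:M : 'M[C]_(N ^ k.-1)) *t X *t (1%:M : 'M[C]_(N ^ (n - k.+1)))).

Definition op1 (n : nat) (A : 'M[C]_N) : 'M[C]_(N ^ n) :=
  conform_mx 1%:M (A *t (1%:M : 'M[C]_(N ^ n.-1))).

Definition is_braiding (X : 'M[C]_(N * N)) : Prop :=
  X \in unitmx /\
  op2 3 1 X *m op2 3 2 X *m op2 3 1 X = op2 3 2 X *m op2 3 1 X *m op2 3 2 X.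

Definition is_involutive (X : 'M[C]_(N * N)) : Prop := X *m X = 1%:M.

Definition is_hecke (q : C) (X : 'M[C]_(N * N)) : Prop :=
  is_braiding X /\ q != 1 /\ q != -1 /\
  (X - q%:M) *m (X + q^-1%:M) = 0.

Definition compatible (X F : 'M[C]_(N * N)) : Prop :=
  op2 3 1 X *m op2 3 2 F *m op2 3 1 F = op2 3 2 F *m op2 3 1 F *m op2 3 2 X /\
  op2 3 2 X *m op2 3 1 F *m op2 3 2 F = op2 3 1 F *m op2 3 2 F *m op2 3 1 X.

Section Overline.
Variables (n : nat) (F : 'M[C]_(N * N)).
Local Notation Fk k := (op2 n k F).

Fixpoint Pd (m : nat) : 'M[C]_(N ^ n) :=
  if m is m'.+1 then Fk m *m Pd m' else 1%:M.
Fixpoint Pdi (m : nat) : 'M[C]_(N ^ n) :=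
  if m is m'.+1 then Pdi m' *m invmx (Fk m) else 1%:M.
Fixpoint Qd (m : nat) : 'M[C]_(N ^ n) :=
  if m is m'.+1 then Fk m.+1 *m Qd m' else 1%:M.
Fixpoint Qdi (m : nat) : 'M[C]_(N ^ n) :=
  if m is m'.+1 then Qdi m' *m invmx (Fk m.+1) else 1%:M.

(* Abar0 m = A_{\overline{m+1}} *)
Fixpoint Abar0 (A : 'M[C]_N) (m : nat) : 'M[C]_(N ^ n) :=
  if m is m'.+1 then Fk m *m Abar0 A m' *m invmx (Fk m) else op1 n A.

Definition Abar (A : 'M[C]_N) (k : nat) : 'M[C]_(N ^ n) := Abar0 A k.-1.

(* X_{\overline{kl}} for k < l:
   (F_{k-1,k}..F_{12})(F_{l-1,l}..F_{23}) X_{12} (F_{23}^{-1}..F_{l-1,l}^{-1})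
   (F_{12}^{-1}..F_{k-1,k}^{-1}) *)
Definition Xbar_lt (X : 'M[C]_(N * N)) (k l : nat) : 'M[C]_(N ^ n) :=
  Pd k.-1 *m Qd l.-2 *m op2 n 1 X *m Qdi l.-2 *m Pdi k.-1.

Definition Xbar (X : 'M[C]_(N * N)) (k l : nat) : 'M[C]_(N ^ n) :=
  if (k < l)%N then Xbar_lt X k l else Xbar_lt (F *m X *m F) l k.
End Overline.

Definition rat_r (F : 'M[C]_(N * N)) (u v : C) : 'M[C]_(N * N) :=
  (u - v)^-1 *: F.

Definition trig_r (F r0 : 'M[C]_(N * N)) (u v : C) : 'M[C]_(N * N) :=
  (u / (u - v)) *: F - 2^-1 *: r0.

Definition expC (h : C) : C :=
  (expR (complex.Re h) * cos (complex.Im h)) +i* (expR (complex.Re h) * sin (complex.Im h)).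

Definition analytic_near1 (Rq : C -> 'M[C]_(N * N)) (rho : C) : Prop :=
  exists c : nat -> 'M[C]_(N * N),
    forall q, `|q - 1| < rho -> forall a b, forall eps : C, 0 < eps ->
      exists K : nat, forall m, (K <= m)%N ->
        `|\sum_(s < m) c s a b * (q - 1) ^+ s - Rq q a b| < eps.

Definition trig_expansion (Rq : C -> 'M[C]_(N * N)) (F r0 : 'M[C]_(N * N)) : Prop :=
  exists M delta : C, 0 <= M /\ 0 < delta /\
    forall h : C, `|h| < delta -> forall a b,
      `|(Rq (expC h) *m F - 1%:M - h *: r0) a b| <= M * `|h| ^+ 2.

Definition trig_family (F : 'M[C]_(N * N)) (Rq : C -> 'M[C]_(N * N))
    (r0 : 'M[C]_(N * N)) : Prop :=
  exists rho : C, 0 < rho /\ analytic_near1 Rq rho /\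
    (forall q, `|q - 1| < rho ->
       compatible (Rq q) F /\ (q != 1 -> q != -1 -> is_hecke q (Rq q))) /\
    Rq 1 = F /\ trig_expansion Rq F r0.

End Braided.

(* Write U := (F_{i-1,i} ... F_{12}) (F_{j-1,j} ... F_{23}) for i < j, so that
   X_{\overline{ij}} = U X_{12} U^{-1}.  Using the braid relation and F^2 = I,
   conjugation by U^{-1} sends A_{\overline k} (k <> i, j) to some A_{\overline a}
   with a >= 3.  It therefore suffices that X_{12} commutes with A_{\overline a}
   for a >= 3, and the X with this property form a unital subalgebra.  It contains
   every X compatible with F: the F_{k,k+1}, k >= 3, commute with X_{12}, and the
   two compatibility relations move X_{12} through F_{23} F_{12} A_1 F_{12} F_{23}.
   Hence it contains F, the rational r-matrix, the products F X F that define
   X_{\overline{ij}} for i > j, and every R(q) F.  Finally, since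
   R(e^h) F = I + h r + O(h^2), a linear map vanishing on I and on every R(q) F
   with q near 1 sends h r to O(h^2), so it vanishes on r. *)

From Stdlib Require Eqdep_dec PeanoNat.
From HB Require Import structures.
From mathcomp Require Import all_boot all_order all_algebra.
From mathcomp Require Import complex mxtens.
From mathcomp Require Import reals sequences exp trigo.
From mathcomp Require Import zify ring lra.
Import Order.TTheory GRing.Theory Num.Theory.
Local Open Scope ring_scope.

Set Implicit Arguments. Unset Strict Implicit. Unset Printing Implicit Defensive.

(* Matrices of sizes that are equal only propositionally (such as those of
   (A *t B) *t D and A *t (B *t D)) are compared as dependent pairs. *)
Section Packing.
Variable T : Type.

Definition sqmx := {m : nat & 'M[T]_m}.
Definition packmx m (A : 'M[T]_m) : sqmx := existT _ m A.

Lemma packmx_inj m (A B : 'M[T]_m) : packmx A = packmx B -> A = B.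
Proof. exact: Eqdep_dec.inj_pair2_eq_dec PeanoNat.Nat.eq_dec _ _ _ _. Qed.

Lemma packmx_size m m' (A : 'M[T]_m) (B : 'M[T]_m') : packmx A = packmx B -> m = m'.
Proof. by move/(f_equal (@projT1 _ _)). Qed.

Lemma packmx_castmx m m' (e : m = m') (A : 'M[T]_m) : packmx (castmx (e, e) A) = packmx A.
Proof. by case: m' / e; rewrite castmx_id. Qed.

Lemma packmx_conform m m' (B : 'M[T]_m') (A : 'M[T]_m) :
  m = m' -> packmx (conform_mx B A) = packmx A.
Proof. by move=> e; case: m' / e in B *; rewrite conform_mx_id. Qed.

Lemma packmx_congr1 (f : forall m, 'M[T]_m -> 'M[T]_m) m m'
    (A : 'M[T]_m) (A' : 'M[T]_m') :
  packmx A = packmx A' -> packmx (f _ A) = packmx (f _ A').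
Proof.
move=> eA; have e := packmx_size eA; case: m' / e in A' eA *.
by rewrite (packmx_inj eA).
Qed.

Lemma packmx_congr2 (f : forall m, 'M[T]_m -> 'M[T]_m -> 'M[T]_m) m m'
    (A B : 'M[T]_m) (A' B' : 'M[T]_m') :
  packmx A = packmx A' -> packmx B = packmx B' -> packmx (f _ A B) = packmx (f _ A' B').
Proof.
move=> eA; have e := packmx_size eA; case: m' / e in A' B' eA *.
by rewrite (packmx_inj eA) => /packmx_inj ->.
Qed.

End Packing.

Section PackedTensor.
Variable R : comPzRingType.
Local Notation I m := (1%:M : 'M[R]_m).

Lemma packmxM m m' (A B : 'M[R]_m) (A' B' : 'M[R]_m') :
  packmx A = packmx A' -> packmx B = packmx B' -> packmx (A *m B) = packmx (A' *m B').
Proof. exact: (packmx_congr2 (fun m => @mulmx R m m m)). Qed.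

Lemma packmxT m m' p p' (A : 'M[R]_m) (A' : 'M[R]_m') (B : 'M[R]_p) (B' : 'M[R]_p') :
  packmx A = packmx A' -> packmx B = packmx B' -> packmx (A *t B) = packmx (A' *t B').
Proof.
move=> eA; have e := packmx_size eA; case: m' / e in A' eA *.
move=> eB; have e := packmx_size eB; case: p' / e in B' eB *.
by rewrite (packmx_inj eA) (packmx_inj eB).
Qed.

Lemma tensmx11 m p : I m *t I p = I (m * p).
Proof.
apply/matrixP => i j; case: (mxtens_indexP i) => i1 i2; case: (mxtens_indexP j) => j1 j2.
rewrite tensmxE !mxE (inj_eq (can_inj (@mxtens_indexK m p))) xpair_eqE.
by case: (i1 == j1); case: (i2 == j2); rewrite /= ?mulr1 ?mul0r ?mulr0.
Qed.

Lemma packmx_tensA m p q (A : 'M[R]_m) (B : 'M[R]_p) (D : 'M[R]_q) :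
  packmx (A *t B *t D) = packmx (A *t (B *t D)).
Proof.
rewrite -(packmx_castmx (esym (mulnA m p q))); congr existT; apply/matrixP => i j.
case: (mxtens_indexP i) => i1 i23; case: (mxtens_indexP i23) => i2 i3.
case: (mxtens_indexP j) => j1 j23; case: (mxtens_indexP j23) => j2 j3.
have idx (a1 : 'I_m) (a2 : 'I_p) (a3 : 'I_q) :
    cast_ord (esym (esym (mulnA m p q))) (mxtens_index (a1, mxtens_index (a2, a3)))
    = mxtens_index (mxtens_index (a1, a2), a3).
  by apply: val_inj; rewrite /= mulnDl -mulnA addnA.
by rewrite castmxE !idx !tensmxE mulrA.
Qed.

Lemma packmx_tens1mx m (A : 'M[R]_m) : packmx (I 1 *t A) = packmx A.
Proof. by rewrite tens_scalar1mx packmx_castmx. Qed.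

Lemma packmx_tensmx1 m (A : 'M[R]_m) : packmx (A *t I 1) = packmx A.
Proof. by rewrite tens_mx_scalar scale1r packmx_castmx. Qed.

Lemma tensmxDl m n p q (A B : 'M[R]_(m, n)) (D : 'M[R]_(p, q)) :
  (A + B) *t D = A *t D + B *t D.
Proof. by apply/matrixP => i j; rewrite !mxE mulrDl. Qed.

Lemma tensmxDr m n p q (A : 'M[R]_(m, n)) (B D : 'M[R]_(p, q)) :
  A *t (B + D) = A *t B + A *t D.
Proof. by apply/matrixP => i j; rewrite !mxE mulrDr. Qed.

Lemma tensmxZl m n p q c (A : 'M[R]_(m, n)) (B : 'M[R]_(p, q)) :
  (c *: A) *t B = c *: (A *t B).
Proof. by apply/matrixP => i j; rewrite !mxE mulrA. Qed.

Lemma tensmxZr m n p q c (A : 'M[R]_(m, n)) (B : 'M[R]_(p, q)) :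
  A *t (c *: B) = c *: (A *t B).
Proof. by apply/matrixP => i j; rewrite !mxE mulrCA. Qed.

End PackedTensor.

Section Embeddings.
Variables (R : realType) (N : nat).
Local Notation C := R[i].
Local Notation I k := (1%:M : 'M[C]_(N ^ k)).
Local Notation op2 := (@op2 R N).
Local Notation op1 := (@op1 R N).

Local Ltac expn_congr := rewrite ?mulnn -?expnS -?expnD; congr expn; lia.
Local Ltac packmx_identities :=
  rewrite !tensmx11; apply: (congr1 (fun m => packmx (1%:M : 'M[C]_m))); expn_congr.

Lemma packmx_op2 n k X : (0 < k < n)%N ->
  packmx (op2 n k X) = packmx (I k.-1 *t (X *t I (n - k.+1))).
Proof. by move=> hk; rewrite /op2 packmx_conform ?packmx_tensA //; expn_congr. Qed.

Lemma packmx_op1 n A : (0 < n)%N -> packmx (op1 n A) = packmx (A *t I n.-1).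
Proof. by move=> hn; rewrite /op1 packmx_conform // -expnS prednK. Qed.

Lemma op2M n k X Y : (0 < k < n)%N -> op2 n k X *m op2 n k Y = op2 n k (X *m Y).
Proof.
move=> hk; apply: packmx_inj.
by rewrite (packmxM (packmx_op2 X hk) (packmx_op2 Y hk)) packmx_op2 // !tensmx_mul !mulmx1.
Qed.

Lemma op2_1 n k : (0 < k < n)%N -> op2 n k 1%:M = 1%:M.
Proof. by move=> hk; apply: packmx_inj; rewrite packmx_op2 //; packmx_identities. Qed.

Lemma op2D n k X Y : (0 < k < n)%N -> op2 n k (X + Y) = op2 n k X + op2 n k Y.
Proof.
move=> hk; apply: packmx_inj.
rewrite (packmx_congr2 (fun m => +%R) (packmx_op2 X hk) (packmx_op2 Y hk)).
by rewrite packmx_op2 // tensmxDl tensmxDr.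
Qed.

Lemma op2Z n k c X : (0 < k < n)%N -> op2 n k (c *: X) = c *: op2 n k X.
Proof.
move=> hk; apply: packmx_inj.
rewrite (packmx_congr1 (fun m => *:%R c) (packmx_op2 X hk)).
by rewrite packmx_op2 // tensmxZl tensmxZr.
Qed.

Lemma op2C_far n a b X Y : (0 < a)%N -> (a.+1 < b)%N -> (b < n)%N ->
  op2 n a X *m op2 n b Y = op2 n b Y *m op2 n a X.
Proof.
move=> a_gt0 ab bn; pose d := (b - a.+2)%N.
have eX : packmx (op2 n a X) =
    packmx (I a.-1 *t (X *t (I d *t (I 2 *t I (n - b.+1))))).
  rewrite packmx_op2; last lia.
  by apply: packmxT => //; apply: packmxT => //; packmx_identities.
have eY : packmx (op2 n b Y) =
    packmx (I a.-1 *t (I 2 *t (I d *t (Y *t I (n - b.+1))))).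
  rewrite packmx_op2; last lia.
  transitivity (packmx (I a.-1 *t (I 2 *t I d) *t (Y *t I (n - b.+1)))).
    by apply: packmxT => //; packmx_identities.
  by rewrite packmx_tensA; apply: packmxT => //; exact: packmx_tensA.
apply: packmx_inj; rewrite (packmxM eX eY) (packmxM eY eX).
by rewrite !tensmx_mul !mulmx1 !mul1mx.
Qed.

Lemma op1C_op2 n b A Y : (1 < b)%N -> (b < n)%N ->
  op1 n A *m op2 n b Y = op2 n b Y *m op1 n A.
Proof.
move=> b_gt1 bn.
have eA : packmx (op1 n A) = packmx (A *t (I b.-2 *t (I 2 *t I (n - b.+1)))).
  rewrite packmx_op1; last lia.
  by apply: packmxT => //; packmx_identities.
have eY : packmx (op2 n b Y) = packmx (I 1 *t (I b.-2 *t (Y *t I (n - b.+1)))).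
  rewrite packmx_op2; last lia.
  transitivity (packmx (I 1 *t I b.-2 *t (Y *t I (n - b.+1)))); last exact: packmx_tensA.
  by apply: packmxT => //; packmx_identities.
apply: packmx_inj; rewrite (packmxM eA eY) (packmxM eY eA).
by rewrite !tensmx_mul !mulmx1 !mul1mx.
Qed.

Definition emb3 n a (M : 'M[C]_(N ^ 3)) := I a.-1 *t (M *t I (n - a.+2)).

Lemma emb3M n a M1 M2 : emb3 n a M1 *m emb3 n a M2 = emb3 n a (M1 *m M2).
Proof. by rewrite /emb3 !tensmx_mul !mulmx1. Qed.

Lemma packmx_op2_31 X : packmx (op2 3 1 X) = packmx (X *t I 1).
Proof. by rewrite packmx_op2 //; exact: packmx_tens1mx. Qed.

Lemma packmx_op2_32 X : packmx (op2 3 2 X) = packmx (I 1 *t X).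
Proof. by rewrite packmx_op2 // -packmx_tensA; exact: packmx_tensmx1. Qed.

Lemma packmx_op2_emb3 n a X : (0 < a)%N -> (a.+1 < n)%N ->
  packmx (op2 n a X) = packmx (emb3 n a (op2 3 1 X)).
Proof.
move=> a_gt0 an; rewrite /emb3 packmx_op2; last lia.
rewrite (packmxT (erefl _) (packmxT (packmx_op2_31 X) (erefl _))).
rewrite (packmxT (erefl _) (packmx_tensA _ _ _)).
by apply: packmxT => //; apply: packmxT => //; packmx_identities.
Qed.

Lemma packmx_op2S_emb3 n a X : (0 < a)%N -> (a.+1 < n)%N ->
  packmx (op2 n a.+1 X) = packmx (emb3 n a (op2 3 2 X)).
Proof.
move=> a_gt0 an; rewrite /emb3 packmx_op2; last lia.
rewrite (packmxT (erefl _) (packmxT (packmx_op2_32 X) (erefl _))).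
rewrite (packmxT (erefl _) (packmx_tensA _ _ _)) -packmx_tensA.
by apply: packmxT => //; packmx_identities.
Qed.

Lemma op2_lift3 n a X Y Z X' Y' Z' : (0 < a)%N -> (a.+1 < n)%N ->
  op2 3 1 X *m op2 3 2 Y *m op2 3 1 Z = op2 3 2 X' *m op2 3 1 Y' *m op2 3 2 Z' ->
  op2 n a X *m op2 n a.+1 Y *m op2 n a Z = op2 n a.+1 X' *m op2 n a Y' *m op2 n a.+1 Z'.
Proof.
move=> a_gt0 an e3; apply: packmx_inj.
rewrite !(packmxM (packmxM (packmx_op2_emb3 _ a_gt0 an) (packmx_op2S_emb3 _ a_gt0 an))
                   (packmx_op2_emb3 _ a_gt0 an)).
rewrite !(packmxM (packmxM (packmx_op2S_emb3 _ a_gt0 an) (packmx_op2_emb3 _ a_gt0 an))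
                   (packmx_op2S_emb3 _ a_gt0 an)).
by rewrite !emb3M e3.
Qed.

End Embeddings.

Lemma comm_mx_conj (K : pzRingType) m (U V B X : 'M[K]_m) :
  U *m V = 1%:M -> V *m U = 1%:M -> comm_mx (V *m B *m U) X ->
  comm_mx B (U *m X *m V).
Proof.
move=> UV VU WX.
have -> : B = U *m (V *m B *m U) *m V by rewrite !mulmxA UV mul1mx -mulmxA UV mulmx1.
move: (V *m B *m U) WX => W WX.
rewrite /comm_mx -!mulmxA (mulmxA V U) VU mul1mx (mulmxA V U) VU mul1mx.
by rewrite (mulmxA W X V) WX -mulmxA.
Qed.

Lemma comm_mx_transport (K : pzRingType) m (x1 x2 f1 f2 a : 'M[K]_m) :
  x1 *m f2 *m f1 = f2 *m f1 *m x2 -> x2 *m f1 *m f2 = f1 *m f2 *m x1 ->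
  comm_mx a x2 -> comm_mx (f2 *m f1 *m a *m f1 *m f2) x1.
Proof.
move=> x1_ff ff_x1 a_x2.
rewrite /comm_mx -(mulmxA _ f2 x1) -(mulmxA _ f1) (mulmxA f1) -ff_x1 !mulmxA x1_ff.
by rewrite -(mulmxA (f2 *m f1) a x2) a_x2 !mulmxA.
Qed.

Lemma comm_mxZ (K : comPzRingType) m (B X : 'M[K]_m) c :
  comm_mx B X -> comm_mx B (c *: X).
Proof. by rewrite /comm_mx -scalemxAl -scalemxAr => ->. Qed.

Lemma braiding_compatible (R : realType) N (F : 'M[R[i]]_(N * N)) :
  is_braiding F -> compatible F F.
Proof. by case=> _ braid; split; [exact: braid | exact: esym braid]. Qed.

Section Braided.
Variables (R : realType) (N n : nat) (F : 'M[R[i]]_(N * N)).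
Hypotheses (F_braid : is_braiding F) (F_invol : is_involutive F).
Local Notation Fk k := (op2 n k F).
Local Notation Pd := (Pd n F).
Local Notation Pdi := (Pdi n F).
Local Notation Qd := (Qd n F).
Local Notation Qdi := (Qdi n F).
Local Notation Abar0 := (Abar0 n F).

Lemma Fk_involutive k : (0 < k < n)%N -> Fk k *m Fk k = 1%:M.
Proof. by move=> hk; rewrite op2M // F_invol op2_1. Qed.

Lemma invmx_Fk k : (0 < k < n)%N -> invmx (Fk k) = Fk k.
Proof.
move=> hk; have [Fk_unit _] := mulmx1_unit (Fk_involutive hk).
by rewrite -[invmx _]mulmx1 -(Fk_involutive hk) mulmxA mulVmx // mul1mx.
Qed.

Lemma Fk_braid a : (0 < a)%N -> (a.+1 < n)%N ->
  Fk a *m Fk a.+1 *m Fk a = Fk a.+1 *m Fk a *m Fk a.+1.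
Proof. by move=> a_gt0 an; apply: op2_lift3 => //; case: F_braid. Qed.

Lemma PdiS m : (m.+1 < n)%N -> Pdi m.+1 = Pdi m *m Fk m.+1.
Proof. by move=> mn; rewrite /= invmx_Fk //; lia. Qed.

Lemma QdiS m : (m.+2 < n)%N -> Qdi m.+1 = Qdi m *m Fk m.+2.
Proof. by move=> mn; rewrite /= invmx_Fk //; lia. Qed.

Lemma Abar0S A a : (a.+1 < n)%N -> Abar0 A a.+1 = Fk a.+1 *m Abar0 A a *m Fk a.+1.
Proof. by move=> an; rewrite /= invmx_Fk //; lia. Qed.

Lemma Pd_inverse m : (m < n)%N -> Pd m *m Pdi m = 1%:M /\ Pdi m *m Pd m = 1%:M.
Proof.
elim: m => [|m IH] mn; first by rewrite /= mulmx1.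
have [PPi PiP] := IH (ltnW mn).
rewrite PdiS //= -!mulmxA (mulmxA (Pd m)) PPi mul1mx Fk_involutive; last lia.
by rewrite (mulmxA (Fk _)) Fk_involutive ?mul1mx //; lia.
Qed.

Lemma Qd_inverse m : (m.+1 < n)%N -> Qd m *m Qdi m = 1%:M /\ Qdi m *m Qd m = 1%:M.
Proof.
elim: m => [|m IH] mn; first by rewrite /= mulmx1.
have [QQi QiQ] := IH (ltnW mn).
rewrite QdiS //= -!mulmxA (mulmxA (Qd m)) QQi mul1mx Fk_involutive; last lia.
by rewrite (mulmxA (Fk _)) Fk_involutive ?mul1mx //; lia.
Qed.

Lemma Fk_Pd_far m b : (b.+2 <= m)%N -> (m < n)%N -> Fk m *m Pd b = Pd b *m Fk m.
Proof.
elim: b => [|b IH] bm mn; first by rewrite /= mulmx1 mul1mx.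
rewrite /= mulmxA -op2C_far //; try lia.
by rewrite -mulmxA IH ?mulmxA //; lia.
Qed.

Lemma Fk_Pdi_far m b : (b.+2 <= m)%N -> (m < n)%N -> Fk m *m Pdi b = Pdi b *m Fk m.
Proof.
elim: b => [|b IH] bm mn; first by rewrite /= mulmx1 mul1mx.
rewrite PdiS; last lia.
rewrite mulmxA IH; try lia.
by rewrite -!mulmxA -op2C_far //; lia.
Qed.

Lemma Fk_Pd_shift m b : (0 < m)%N -> (m < b)%N -> (b < n)%N ->
  Fk m *m Pd b = Pd b *m Fk m.+1.
Proof.
move=> m_gt0; elim: b => [|b IH] // mb bn.
have [lt_mb | le_bm] := ltnP m b.
  rewrite /= mulmxA op2C_far //; try lia.
  by rewrite -mulmxA IH ?mulmxA //; lia.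
have eb : b = m by lia.
subst b; case: m m_gt0 {IH mb le_bm} bn => [|m] // _ mn.
rewrite /= !mulmxA Fk_braid //; try lia.
by rewrite -!mulmxA Fk_Pd_far //; lia.
Qed.

Lemma Pdi_Fk_shift m b : (0 < m)%N -> (m < b)%N -> (b < n)%N ->
  Pdi b *m Fk m = Fk m.+1 *m Pdi b.
Proof.
move=> m_gt0 mb bn; have [PPi PiP] := Pd_inverse bn.
rewrite -[Pdi b *m Fk m]mulmx1 -PPi !mulmxA -(mulmxA _ (Fk m)) Fk_Pd_shift //.
by rewrite mulmxA PiP mul1mx.
Qed.

Lemma Abar0E A a : (a < n)%N -> Abar0 A a = Pd a *m op1 n A *m Pdi a.
Proof.
elim: a => [|a IH] an; first by rewrite /= mulmx1 mul1mx.
by rewrite Abar0S // IH ?PdiS /= ?mulmxA //; lia.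
Qed.

Lemma Fk_conj_Abar0 A m a : (0 < m < n)%N -> (a < n)%N -> m != a -> m != a.+1 ->
  Fk m *m Abar0 A a *m Fk m = Abar0 A a.
Proof.
move=> mn an ma maS; rewrite Abar0E //.
have [lt_ma | lt_am | eq_ma] := ltngtP m a; last by rewrite eq_ma eqxx in ma.
  rewrite !mulmxA Fk_Pd_shift //; try lia.
  rewrite -!mulmxA Pdi_Fk_shift //; try lia.
  rewrite (mulmxA (Fk m.+1)) -op1C_op2; try lia.
  by rewrite (mulmxA _ (Fk m.+1)) -(mulmxA (op1 n A)) Fk_involutive ?mulmx1 //; lia.
rewrite !mulmxA Fk_Pd_far; try lia.
rewrite -(mulmxA (Pd a)) -op1C_op2; try lia.
rewrite -!mulmxA (mulmxA (Fk m)) Fk_Pdi_far; try lia.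
by rewrite -mulmxA Fk_involutive ?mulmx1 //; lia.
Qed.

Lemma Pd_conj_Abar0 A m a : (m < n)%N -> (a < n)%N ->
  ((a < m)%N -> Pdi m *m Abar0 A a *m Pd m = Abar0 A a.+1) /\
  ((m < a)%N -> Pdi m *m Abar0 A a *m Pd m = Abar0 A a).
Proof.
elim: m a => [|m IH] a mn an; first by split => // _; rewrite /= mulmx1 mul1mx.
have -> : Pdi m.+1 *m Abar0 A a *m Pd m.+1 =
          Pdi m *m (Fk m.+1 *m Abar0 A a *m Fk m.+1) *m Pd m.
  by rewrite PdiS // /= !mulmxA.
split => [lt_am | lt_ma].
  have [lt_am' | le_ma] := ltnP a m.
    by rewrite Fk_conj_Abar0 ?(proj1 (IH a _ _)) //; lia.
  have eam : a = m by lia.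
  by subst a; rewrite -Abar0S // (proj2 (IH m.+1 (ltnW mn) mn)).
by rewrite Fk_conj_Abar0 ?(proj2 (IH a _ _)) //; lia.
Qed.

Lemma Qd_conj_Abar0 A m a : (m.+1 < n)%N -> (a < n)%N ->
  ((0 < a <= m)%N -> Qdi m *m Abar0 A a *m Qd m = Abar0 A a.+1) /\
  ((m.+1 < a)%N -> Qdi m *m Abar0 A a *m Qd m = Abar0 A a).
Proof.
elim: m a => [|m IH] a mn an; first by split => [|_]; [lia | rewrite /= mulmx1 mul1mx].
have -> : Qdi m.+1 *m Abar0 A a *m Qd m.+1 =
          Qdi m *m (Fk m.+2 *m Abar0 A a *m Fk m.+2) *m Qd m.
  by rewrite QdiS // /= !mulmxA.
split => [a_range | lt_ma].
  have [lt_am | le_ma] := ltnP a m.+1.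
    by rewrite Fk_conj_Abar0 ?(proj1 (IH a _ _)) //; lia.
  have eam : a = m.+1 by lia.
  by subst a; rewrite -Abar0S // (proj2 (IH m.+2 (ltnW mn) mn)).
by rewrite Fk_conj_Abar0 ?(proj2 (IH a _ _)) //; lia.
Qed.

Lemma comm_Abar0_op2_1 X A a : compatible X F -> (1 < a < n)%N ->
  comm_mx (Abar0 A a) (op2 n 1 X).
Proof.
case=> X_121 X_212; elim: a => [|a IH] // a_range.
have [a_gt1 | a_le1] := ltnP 1 a.
  rewrite /comm_mx Abar0S; last lia.
  rewrite -!mulmxA -op2C_far //; try lia.
  rewrite (mulmxA (Abar0 A a)) IH; try lia.
  by rewrite !mulmxA -op2C_far //; lia.
have -> : a = 1%N by lia.
have n_gt2 : (2 < n)%N by lia.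
rewrite !Abar0S //= ?mulmxA; last exact: ltnW.
apply: (comm_mx_transport (x2 := op2 n 2 X)).
- exact: op2_lift3 (isT : (0 < 1)%N) n_gt2 X_121.
- exact: esym (op2_lift3 (isT : (0 < 1)%N) n_gt2 (esym X_212)).
- exact: op1C_op2 (isT : (1 < 2)%N) n_gt2.
Qed.

Lemma Xbar_lt_comm_Abar0 A X i j k : (0 < i)%N -> (i < j)%N -> (j <= n)%N ->
  (0 < k)%N -> (k <= n)%N -> k != i -> k != j ->
  (forall a, (1 < a < n)%N -> comm_mx (Abar0 A a) (op2 n 1 X)) ->
  comm_mx (Abar0 A k.-1) (Xbar_lt n F X i j).
Proof.
move=> i_gt0 ij jn k_gt0 kn ki kj X_comm.
have in' : (i.-1 < n)%N by lia.
have jn' : (j.-2.+1 < n)%N by lia.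
have [PPi PiP] := Pd_inverse in'; have [QQi QiQ] := Qd_inverse jn'.
have -> : Xbar_lt n F X i j =
          Pd i.-1 *m Qd j.-2 *m op2 n 1 X *m (Qdi j.-2 *m Pdi i.-1).
  by rewrite /Xbar_lt !mulmxA.
apply: comm_mx_conj.
- by rewrite -mulmxA (mulmxA (Qd _)) QQi mul1mx.
- by rewrite -mulmxA (mulmxA (Pdi _)) PiP mul1mx.
have -> : Qdi j.-2 *m Pdi i.-1 *m Abar0 A k.-1 *m (Pd i.-1 *m Qd j.-2) =
          Qdi j.-2 *m (Pdi i.-1 *m Abar0 A k.-1 *m Pd i.-1) *m Qd j.-2.
  by rewrite !mulmxA.
(* U^{-1} A_{\overline k} U is A_{\overline{k+1}}, A_{\overline k} or A_{\overline{k-1}}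
   according as k < i, i < k < j or j < k. *)
have kn' : (k.-1 < n)%N by lia.
have [P_lt P_gt] := Pd_conj_Abar0 A in' kn'.
have [lt_ki | lt_ik] := ltnP k i.
  have kn'' : (k.-1.+1 < n)%N by lia.
  have [Q_le _] := Qd_conj_Abar0 A jn' kn''.
  by rewrite P_lt ?Q_le; [apply: X_comm | ..]; lia.
have [Q_le Q_gt] := Qd_conj_Abar0 A jn' kn'.
rewrite P_gt; last lia.
have [lt_kj | lt_jk] := ltnP k j.
  by rewrite Q_le; [apply: X_comm | ]; lia.
by rewrite Q_gt; [apply: X_comm | ]; lia.
Qed.

Lemma Xbar_comm_Abar A X i j k : (0 < i)%N -> (0 < j)%N -> (0 < k)%N ->
  (i <= n)%N -> (j <= n)%N -> (k <= n)%N -> i != j -> j != k -> i != k ->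
  (forall a, (1 < a < n)%N -> comm_mx (Abar0 A a) (op2 n 1 X)) ->
  comm_mx (Abar n F A k) (Xbar n F X i j).
Proof.
move=> i_gt0 j_gt0 k_gt0 i_le j_le k_le ij jk ik X_comm; rewrite /Xbar /Abar.
have ki : k != i by rewrite eq_sym.
have kj : k != j by rewrite eq_sym.
case: ltnP => [lt_ij | le_ji].
  exact: (Xbar_lt_comm_Abar0 i_gt0 lt_ij j_le k_gt0 k_le ki kj X_comm).
have lt_ji : (j < i)%N by rewrite ltn_neqAle eq_sym ij.
apply: (Xbar_lt_comm_Abar0 j_gt0 lt_ji i_le k_gt0 k_le kj ki) => a a_range.
have F_comm := comm_Abar0_op2_1 A (braiding_compatible F_braid) a_range.
rewrite -!op2M; try lia.
by apply: comm_mxM; [apply: comm_mxM; [exact: F_comm | exact: X_comm] | exact: F_comm].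
Qed.

End Braided.

Lemma le0_of_le_mul_small (K : realFieldType) (x L s0 : K) : 0 < s0 -> 0 <= L ->
  (forall s, 0 < s -> s < s0 -> x <= L * s) -> x <= 0.
Proof.
move=> s0_gt0 L_ge0 small; rewrite leNgt; apply/negP => x_gt0.
pose s := Num.min (s0 / 2) (x / (L + 1) / 2).
have s_le_s0 : s <= s0 / 2 by rewrite ge_min lexx.
have s_le_x : s <= x / (L + 1) / 2 by rewrite ge_min lexx orbT.
have s_gt0 : 0 < s by rewrite lt_min !divr_gt0 //; lra.
have := small s s_gt0 ltac:(lra).
have : s * (L + 1) * 2 <= x by rewrite -ler_pdivlMr // -ler_pdivlMr //; lra.
nra.
Qed.

Local Open Scope complex_scope.

Lemma linear_entry_bound (K : numFieldType) m n p q (Phi : 'M[K]_(m, n) -> 'M[K]_(p, q)) :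
  {morph Phi : X Y / X + Y} -> (forall c, {morph Phi : X / c *: X}) ->
  forall i j, exists2 B : K, 0 <= B &
    forall (E : 'M_(m, n)) (e : K), (forall a b, `|E a b| <= e) -> `|Phi E i j| <= e * B.
Proof.
move=> PhiD PhiZ i j.
have Phi0 : Phi 0 = 0 by rewrite -(scale0r 0) PhiZ scale0r.
exists (\sum_a \sum_b `|Phi (delta_mx a b) i j|).
  by apply: sumr_ge0 => a _; apply: sumr_ge0.
move=> E e E_le.
rewrite {1}(matrix_sum_delta E) (big_morph Phi PhiD Phi0) summxE mulr_sumr.
apply: le_trans (ler_norm_sum _ _ _) _; apply: ler_sum => a _.
rewrite (big_morph Phi PhiD Phi0) summxE mulr_sumr.
apply: le_trans (ler_norm_sum _ _ _) _; apply: ler_sum => b _.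
by rewrite PhiZ mxE normrM ler_wpM2r.
Qed.

Section FirstOrder.
Variables (R : realType) (N : nat).
Local Notation C := R[i].

Lemma norm_le_mul_small_eq0 (z L : C) (s0 : R) : 0 < s0 -> 0 <= L ->
  (forall s : R, 0 < s -> s < s0 -> `|z| <= L * s%:C) -> z = 0.
Proof.
move=> s0_gt0; case: L => a b; rewrite lecE /= => /andP[_ a_ge0] small.
have /andP[_ Re_ge0] : (_ == _) && (0 <= complex.Re `|z|) := normr_ge0 z.
have Re_le0 : complex.Re `|z| <= 0.
  apply: (le0_of_le_mul_small s0_gt0 a_ge0) => s s_gt0 s_lt.
  by move: (small s s_gt0 s_lt); rewrite lecE /= !mulr0 subr0 => /andP[].
apply: normr0_eq0; rewrite -(RRe_real (normr_real z)).
by rewrite (_ : complex.Re `|z| = 0) //; apply/eqP; rewrite eq_le Re_le0.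
Qed.

Lemma linear_trig_expansion_eq0 m p (Phi : 'M[C]_(N * N) -> 'M[C]_(m, p))
    (Rq : C -> 'M[C]_(N * N)) (F r0 : 'M[C]_(N * N)) (rho : C) :
  {morph Phi : X Y / X + Y} -> (forall c, {morph Phi : X / c *: X}) -> 0 < rho ->
  (forall q, `|q - 1| < rho -> Phi (Rq q *m F) = 0) -> Phi 1%:M = 0 ->
  trig_expansion Rq F r0 -> Phi r0 = 0.
Proof.
move=> PhiD PhiZ rho_gt0 Phi_RqF Phi1 [M [delta [M_ge0 [delta_gt0 expansion]]]].
apply/matrixP => i j; rewrite mxE.
have [B B_ge0 Phi_bound] := linear_entry_bound PhiD PhiZ i j.
move: rho_gt0 delta_gt0; rewrite !ltcE /= => /andP[/eqP rho_real rho_gt0].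
move=> /andP[/eqP delta_real delta_gt0].
pose s0 := Num.min (complex.Re rho) (complex.Re delta).
apply: (@norm_le_mul_small_eq0 _ (M * B) s0); first by rewrite lt_min rho_gt0.
  exact: mulr_ge0.
move=> s s_gt0 s_lt; move: s_lt; rewrite lt_min => /andP[s_rho s_delta].
(* h = ln (1 + s) makes q = e^h = 1 + s real, so |q - 1| = s. *)
pose h := (ln (1 + s))%:C.
have lns_gt0 : 0 < ln (1 + s) by apply: ln_gt0; lra.
have lns_le : ln (1 + s) <= s by apply: le_ln1Dx; lra.
have h_norm : `|h| = h by apply: ger0_norm; rewrite ler0c ltW.
have h_gt0 : 0 < `|h| by rewrite h_norm ltcR.
have exp_h : expC h = (1 + s)%:C.
  by rewrite /expC /= cos0 sin0 mulr1 mulr0 lnK // posrE; lra.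
have q_near1 : `|expC h - 1| < rho.
  rewrite exp_h rmorphD rmorph1 addrC addKr ger0_norm ?ler0c ?ltW //.
  by rewrite ltcE /= rho_real eqxx s_rho.
have h_delta : `|h| < delta.
  by rewrite h_norm ltcE /= delta_real eqxx; apply: le_lt_trans s_delta.
have PhiE : Phi (Rq (expC h) *m F - 1%:M - h *: r0) = - h *: Phi r0.
  rewrite -scaleN1r -scaleNr !PhiD !PhiZ Phi_RqF // Phi1.
  by rewrite scaler0 !add0r.
have := Phi_bound _ _ (expansion h h_delta).
rewrite PhiE mxE normrM normrN => bound.
apply: (@le_trans _ _ (M * B * `|h|)).
  rewrite -(ler_pM2l h_gt0); apply: le_trans bound _.
  by rewrite le_eqVlt; apply/orP; left; apply/eqP; ring.
by rewrite ler_wpM2l ?mulr_ge0 // h_norm lecR.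
Qed.

End FirstOrder.

Lemma comm_Abar0_op2_1_trig (R : realType) N n (F : 'M[R[i]]_(N * N)) Rq r0 A a :
  is_involutive F -> compatible F F -> trig_family F Rq r0 -> (1 < a < n)%N ->
  comm_mx (Abar0 n F A a) (op2 n 1 r0).
Proof.
move=> F_invol F_compat [rho [rho_gt0 [_ [Rq_compat [_ expansion]]]]] a_range.
have n1 : (0 < 1 < n)%N by lia.
pose Phi X := Abar0 n F A a *m op2 n 1 X - op2 n 1 X *m Abar0 n F A a.
apply/eqP; rewrite -subr_eq0; apply/eqP.
apply: (@linear_trig_expansion_eq0 _ _ _ _ Phi Rq F r0 rho) => //.
- by move=> X Y; rewrite /Phi op2D // mulmxDl mulmxDr opprD addrACA.
- by move=> c X; rewrite /Phi op2Z // -scalemxAl -scalemxAr scalerBr.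
- move=> q q_near1; apply/eqP; rewrite subr_eq0; apply/eqP; rewrite -op2M //.
  have [RqF_compat _] := Rq_compat q q_near1.
  by apply: comm_mxM; apply: (comm_Abar0_op2_1 F_invol A _ a_range).
- by rewrite /Phi /= op2_1 // mulmx1 mul1mx subrr.
Qed.

Unset Implicit Arguments. Set Strict Implicit. Set Printing Implicit Defensive.

Theorem mainTheorem4 (R : realType) (N : nat) (F : 'M[R[i]]_(N * N))
    (r : R[i] -> R[i] -> 'M[R[i]]_(N * N)) :
  is_braiding F -> is_involutive F ->
  ((exists Rb : 'M[R[i]]_(N * N), is_braiding Rb /\ compatible Rb F) /\
     (forall u v, r u v = rat_r F u v)
   \/ (exists (Rq : R[i] -> 'M[R[i]]_(N * N)) (r0 : 'M[R[i]]_(N * N)),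
        trig_family F Rq r0 /\ (forall u v, r u v = trig_r F r0 u v))) ->
  forall (A : 'M[R[i]]_N) (n i j k : nat),
    (0 < i)%N -> (0 < j)%N -> (0 < k)%N ->
    (i <= n)%N -> (j <= n)%N -> (k <= n)%N ->
    i != j -> j != k -> i != k ->
  forall u v : R[i], u != v ->
    Xbar n F (r u v) i j *m Abar n F A k = Abar n F A k *m Xbar n F (r u v) i j.
Proof.
move=> F_braid F_invol r_cases A n i j k i_gt0 j_gt0 k_gt0 i_le j_le k_le ij jk ik u v _.
apply: comm_mx_sym.
apply: (Xbar_comm_Abar F_braid F_invol i_gt0 j_gt0 k_gt0 i_le j_le k_le ij jk ik).
move=> a a_range.
have F_compat := braiding_compatible F_braid.
have F_comm := comm_Abar0_op2_1 F_invol A F_compat a_range.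
have n1 : (0 < 1 < n)%N by lia.
case: r_cases => [[_ ->] | [Rq [r0 [trig ->]]]].
  by rewrite /rat_r op2Z //; exact: comm_mxZ.
rewrite /trig_r -scaleNr op2D // !op2Z //.
apply: comm_mxD; apply: comm_mxZ; first exact: F_comm.
exact: comm_Abar0_op2_1_trig F_invol F_compat trig a_range.
Qed.
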